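(* Let $\mathcal A\in\mathbb C^{n_1\times n_1\times n_3}$ with $\mathrm{ind}(\mathcal A)=k$, let $\mathcal A^-$ be a fixed element of $\mathcal A\{1\}$, and let $\mathcal X\in\mathbb C^{n_1\times n_1\times n_3}$. The following are equivalent: (a) $\mathcal X=\mathcal A^{-,D}$; (b) $\mathcal X\mathcal A\mathcal X=\mathcal X$, $\mathcal X\mathcal A^k=\mathcal A^-\mathcal A^k$, $\mathcal A\mathcal X\mathcal A=\mathcal A\mathcal A^D\mathcal A$ and $\mathcal A\mathcal X=\mathcal A\mathcal A^D$; (c) $\mathcal A^-\mathcal A\mathcal X=\mathcal X$, $\mathcal X\mathcal A^k=\mathcal A^-\mathcal A^k$ and $\mathcal X=\mathcal X\mathcal A\mathcal A^D$; (d) $\mathcal A^-\mathcal A\mathcal X\mathcal A\mathcal A^D=\mathcal X$ and $\mathcal A\mathcal X\mathcal A^k=\mathcal A^k$; (e) $\mathcal A^-\mathcal A\mathcal A^D\mathcal A=\mathcal X\mathcal A$, $\mathcal A^k\mathcal X=\mathcal A^k\mathcal A^D$ and $\mathcal X=\mathcal X\mathcal A\mathcal A^D$.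
   Context: Fix a nonsingular matrix $M\in\mathbb C^{n_3\times n_3}$. For $\mathcal C\in\mathbb C^{n_1\times n_2\times n_3}$ let $\widehat{\mathcal C}=\mathcal C\times_3M$, i.e. $\widehat{\mathcal C}_{ijk}=\sum_{l=1}^{n_3}M_{kl}\mathcal C_{ijl}$, and let $\widehat{\mathcal C}^{(i)}$ denote its $i$-th frontal slice. The M-product $\mathcal C\star_M\mathcal D$ of $\mathcal C\in\mathbb C^{n_1\times n_2\times n_3}$ and $\mathcal D\in\mathbb C^{n_2\times l\times n_3}$ is the unique tensor with $\widehat{\mathcal C\star_M\mathcal D}^{(i)}=\widehat{\mathcal C}^{(i)}\widehat{\mathcal D}^{(i)}$ for all $i\in[n_3]$. Juxtaposition of tensors denotes the M-product; powers are M-product powers with $\mathcal A^0=\mathcal I$ where $\widehat{\mathcal I}^{(i)}=I_{n_1}$. $\mathcal A\{1\}$ is the set of all $\mathcal W$ with $\mathcal A\mathcal W\mathcal A=\mathcal A$. The index $\mathrm{ind}(\mathcal A)$ is $\max_{i}\mathrm{ind}(\widehat{\mathcal A}^{(i)})$, where the index of a square matrix $B$ is the least $k\ge0$ with $\mathrm{rank}(B^{k+1})=\mathrm{rank}(B^k)$. For $\mathrm{ind}(\mathcal A)=k$, the Drazin inverse $\mathcal A^D$ is the unique $\mathcal W$ with $\mathcal W\mathcal A^{k+1}=\mathcal A^k$, $\mathcal W\mathcal A\mathcal W=\mathcal W$, $\mathcal A\mathcal W=\mathcal W\mathcal A$. The 1-D inverse is $\mathcal A^{-,D}=\mathcal A^-\mathcal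 A\mathcal A^D$. *)

From HB Require Import structures.
From mathcomp Require Import all_boot all_order all_algebra.
From mathcomp Require Import reals.
From mathcomp.real_closed Require Import complex.
Set Implicit Arguments. Unset Strict Implicit. Unset Printing Implicit Defensive.
Import Order.TTheory GRing.Theory Num.Theory.
Local Open Scope ring_scope.

(* A third-order tensor in C^{n1 x n2 x n3}, stored by frontal slices. *)
Definition tensor (C : Type) (n1 n2 n3 : nat) := {ffun 'I_n3 -> 'M[C]_(n1, n2)}.

Section MProduct.
Variable C : fieldType.
Variable n3 : nat.
Variable M : 'M[C]_n3.

Definition thm_hat n1 n2 (T : tensor C n1 n2 n3) : tensor C n1 n2 n3 :=
  [ffun k => \sum_(l < n3) M k l *: T l].

Definition thm_unhat n1 n2 (T : tensor C n1 n2 n3) : tensor C n1 n2 n3 :=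
  [ffun k => \sum_(l < n3) invmx M k l *: T l].

Definition mprod n1 n2 l (A : tensor C n1 n2 n3) (B : tensor C n2 l n3)
  : tensor C n1 l n3 :=
  thm_unhat [ffun i => thm_hat A i *m thm_hat B i].

Definition mid n1 : tensor C n1 n1 n3 := thm_unhat [ffun _ => 1%:M].

Definition mpow n1 (A : tensor C n1 n1 n3) (k : nat) : tensor C n1 n1 n3 :=
  iter k (mprod A) (mid n1).

End MProduct.

Definition mxpow (C : fieldType) n (B : 'M[C]_n) (k : nat) : 'M[C]_n :=
  iter k (mulmx B) 1%:M.

Definition is_mx_index (C : fieldType) n (B : 'M[C]_n) (k : nat) : Prop :=
  \rank (mxpow B k.+1) = \rank (mxpow B k) /\
  (forall j, (j < k)%N -> \rank (mxpow B j.+1) <> \rank (mxpow B j)).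

(* ind(A) = k : k is the maximum over i of ind(hat A^(i)) *)
Definition is_tensor_index (C : fieldType) n1 n3 (M : 'M[C]_n3)
  (A : tensor C n1 n1 n3) (k : nat) : Prop :=
  (forall i, exists2 ki, is_mx_index (thm_hat M A i) ki & (ki <= k)%N) /\
  ((0 < n3)%N -> exists i, is_mx_index (thm_hat M A i) k) /\
  (n3 = 0%N -> k = 0%N).

From HB Require Import structures.
From mathcomp Require Import all_boot all_order all_algebra.
From mathcomp Require Import reals.
From mathcomp.real_closed Require Import complex.
Set Implicit Arguments. Unset Strict Implicit. Unset Printing Implicit Defensive.
Import GRing.Theory.
Local Open Scope ring_scope.

(* For an invertible M the M-product makes the square tensors a monoid, so the
   theorem is a statement about a monoid element a with Drazin inverse d and
   inner inverse g.  Everything rests on a^k d^k = a d: it turns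
   y a^k = z a^k into y a d = z a d, which recovers X = g a d from each of the
   characterizations (b)-(e). *)

Section ModeThreeProduct.
Variables (C : comPzRingType) (n1 n2 n3 : nat).

Definition mode3 (P : 'M[C]_n3) (T : tensor C n1 n2 n3) : tensor C n1 n2 n3 :=
  [ffun k => \sum_(l < n3) P k l *: T l].

Lemma mode3_mul (P Q : 'M[C]_n3) (T : tensor C n1 n2 n3) :
  mode3 P (mode3 Q T) = mode3 (P *m Q) T.
Proof.
apply/ffunP => k; rewrite !ffunE.
under eq_bigr => l _ do rewrite ffunE scaler_sumr.
rewrite exchange_big /=; apply: eq_bigr => m _.
by rewrite mxE scaler_suml; apply: eq_bigr => l _; rewrite scalerA.
Qed.

Lemma mode3_1 (T : tensor C n1 n2 n3) : mode3 1%:M T = T.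
Proof.
apply/ffunP => k; rewrite ffunE (bigD1 k) //= big1 ?addr0.
  by rewrite mxE eqxx scale1r.
by move=> m nmk; rewrite mxE eq_sym (negbTE nmk) scale0r.
Qed.

End ModeThreeProduct.

Section MProductMonoid.
Variables (C : fieldType) (n3 : nat) (M : 'M[C]_n3).
Hypothesis M_unit : M \in unitmx.

Lemma hat_unhat n1 n2 (T : tensor C n1 n2 n3) : thm_hat M (thm_unhat M T) = T.
Proof. by rewrite [LHS](mode3_mul M (invmx M)) mulmxV // mode3_1. Qed.

Lemma unhat_hat n1 n2 (T : tensor C n1 n2 n3) : thm_unhat M (thm_hat M T) = T.
Proof. by rewrite [LHS](mode3_mul (invmx M) M) mulVmx // mode3_1. Qed.

Lemma hat_inj n1 n2 : injective (@thm_hat C n3 M n1 n2).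
Proof. exact: (can_inj (@unhat_hat n1 n2)). Qed.

Lemma hat_mprod n1 n2 l (A : tensor C n1 n2 n3) (B : tensor C n2 l n3) i :
  thm_hat M (mprod M A B) i = thm_hat M A i *m thm_hat M B i.
Proof. by rewrite /mprod hat_unhat ffunE. Qed.

Lemma mprodA n1 n2 n4 n5 (A : tensor C n1 n2 n3) (B : tensor C n2 n4 n3)
    (D : tensor C n4 n5 n3) :
  mprod M (mprod M A B) D = mprod M A (mprod M B D).
Proof. by apply: hat_inj; apply/ffunP => i; rewrite !hat_mprod mulmxA. Qed.

Lemma mprod1 n1 n2 (A : tensor C n1 n2 n3) : mprod M (mid M n1) A = A.
Proof.
by apply: hat_inj; apply/ffunP => i; rewrite hat_mprod hat_unhat ffunE mul1mx.
Qed.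

Lemma mprodr1 n1 n2 (A : tensor C n1 n2 n3) : mprod M A (mid M n2) = A.
Proof.
apply: hat_inj; apply/ffunP => i.
by rewrite hat_mprod hat_unhat [X in _ *m X]ffunE mulmx1.
Qed.

End MProductMonoid.

Section DrazinOneInverse.
Variables (T : Type) (mul : T -> T -> T) (one : T).
Hypothesis mulmA : forall x y z, mul (mul x y) z = mul x (mul y z).
Hypothesis mul1m : forall x, mul one x = x.
Hypothesis mulm1 : forall x, mul x one = x.
Local Notation "x ** y" := (mul x y) (at level 40, left associativity).
Local Notation "x ^^ j" := (iter j (mul x) one) (at level 30).

Lemma commute_pow (a b : T) j : b ** a = a ** b -> b ** a ^^ j = a ^^ j ** b.
Proof.
move=> ab; elim: j => [|j IH] /=; first by rewrite mul1m mulm1.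
by rewrite -mulmA ab !mulmA IH.
Qed.

Variables (a d g : T) (k : nat).
Hypothesis drazin_pow : d ** a ^^ k.+1 = a ^^ k.
Hypothesis drazin_outer : d ** a ** d = d.
Hypothesis drazin_comm : a ** d = d ** a.
Hypothesis inner_g : a ** g ** a = a.

Lemma mul_inner_g y : a ** (g ** (a ** y)) = a ** y.
Proof. by rewrite -!mulmA inner_g. Qed.

Lemma drazin_outerA : d ** (a ** d) = d.
Proof. by rewrite -mulmA drazin_outer. Qed.

Lemma drazin_mul_pow : a ** (d ** a ^^ k) = a ^^ k.
Proof. by rewrite -mulmA drazin_comm mulmA drazin_pow. Qed.

Lemma pow_mul_drazin : a ^^ k ** (d ** a) = a ^^ k.
Proof.
rewrite -drazin_comm -mulmA -(commute_pow k (erefl (a ** a))).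
by rewrite -(commute_pow k.+1 (esym drazin_comm)).
Qed.

(* By commutation the left side is (a d)^(j+1), and a d is idempotent. *)
Lemma pow_mul_drazin_pow j : a ^^ j.+1 ** d ^^ j.+1 = a ** d.
Proof.
elim: j => [|j IH]; first by rewrite /= !mulm1.
change (a ** a ^^ j.+1 ** (d ** d ^^ j.+1) = a ** d).
rewrite mulmA -(mulmA _ d) -(commute_pow _ (esym drazin_comm)) mulmA IH.
by rewrite drazin_outerA.
Qed.

(* For k = 0 the Drazin inverse is a two-sided inverse. *)
Lemma pow_index_mul_drazin_pow : a ^^ k ** d ^^ k = a ** d.
Proof.
case: k drazin_pow => [|j _]; last exact: pow_mul_drazin_pow.
by rewrite /= !mulm1 drazin_comm => ->.
Qed.

Lemma mul_drazin_of_mul_pow y z :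
  y ** a ^^ k = z ** a ^^ k -> y ** a ** d = z ** a ** d.
Proof.
by move=> yz; rewrite !mulmA -pow_index_mul_drazin_pow -!mulmA yz.
Qed.

Variable x : T.

Lemma one_drazin_charb :
  x = g ** a ** d <->
  [/\ x ** a ** x = x, x ** a ^^ k = g ** a ^^ k,
      a ** x ** a = a ** d ** a & a ** x = a ** d].
Proof.
split=> [-> | [xax xak _ ax]].
  by rewrite !mulmA !mul_inner_g drazin_outerA drazin_mul_pow.
by rewrite -xax mulmA ax -mulmA; apply: mul_drazin_of_mul_pow.
Qed.

Lemma one_drazin_charc :
  x = g ** a ** d <->
  [/\ g ** a ** x = x, x ** a ^^ k = g ** a ^^ k & x = x ** a ** d].
Proof.
split=> [-> | [_ xak ->]]; last exact: mul_drazin_of_mul_pow.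
by rewrite !mulmA !mul_inner_g drazin_outerA drazin_mul_pow.
Qed.

Lemma one_drazin_chard :
  x = g ** a ** d <->
  g ** a ** x ** a ** d = x /\ a ** x ** a ^^ k = a ^^ k.
Proof.
split=> [-> | [gxad axak]].
  by rewrite !mulmA !mul_inner_g drazin_outerA drazin_mul_pow.
have axad : a ** (x ** (a ** d)) = a ** d.
  rewrite -!mulmA -[RHS]mul1m -mulmA.
  by apply: mul_drazin_of_mul_pow; rewrite mul1m.
by rewrite -[LHS]gxad !mulmA axad.
Qed.

Lemma one_drazin_chare :
  x = g ** a ** d <->
  [/\ g ** a ** d ** a = x ** a, a ^^ k ** x = a ^^ k ** d
    & x = x ** a ** d].
Proof.
split=> [-> | [gada _ ->]].
  split; rewrite ?mulmA ?drazin_outerA //.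
  by rewrite -{1}pow_mul_drazin !mulmA mul_inner_g drazin_outerA.
by rewrite -gada !mulmA drazin_outerA.
Qed.

End DrazinOneInverse.

Local Open Scope complex_scope.

Theorem theorem3p7 (R : realType) (n1 n3 : nat) (M : 'M[R[i]]_n3)
  (hM : M \in unitmx) (A : tensor R[i] n1 n1 n3) (k : nat)
  (hk : is_tensor_index M A k)
  (AD : tensor R[i] n1 n1 n3)
  (hAD1 : mprod M AD (mpow M A k.+1) = mpow M A k)
  (hAD2 : mprod M (mprod M AD A) AD = AD)
  (hAD3 : mprod M A AD = mprod M AD A)
  (Am : tensor R[i] n1 n1 n3)
  (hAm : mprod M (mprod M A Am) A = A)
  (X : tensor R[i] n1 n1 n3) :
  let mp := @mprod _ _ M n1 n1 n1 in
  let Ak := mpow M A k in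
  [/\ (X = mp (mp Am A) AD) <->
        [/\ mp (mp X A) X = X, mp X Ak = mp Am Ak,
            mp (mp A X) A = mp (mp A AD) A & mp A X = mp A AD],
      (X = mp (mp Am A) AD) <->
        [/\ mp (mp Am A) X = X, mp X Ak = mp Am Ak & X = mp (mp X A) AD],
      (X = mp (mp Am A) AD) <->
        (mp (mp (mp (mp Am A) X) A) AD = X /\ mp (mp A X) Ak = Ak) &
      (X = mp (mp Am A) AD) <->
        [/\ mp (mp (mp Am A) AD) A = mp X A, mp Ak X = mp Ak AD
          & X = mp (mp X A) AD]].
Proof.
move=> mp Ak.
have mpA := @mprodA _ _ M hM n1 n1 n1 n1.
have mp1 := @mprod1 _ _ M hM n1 n1.
have mpr1 := @mprodr1 _ _ M hM n1 n1.
split.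
- exact: (one_drazin_charb mpA mp1 mpr1 hAD1 hAD2 hAD3 hAm X).
- exact: (one_drazin_charc mpA mp1 mpr1 hAD1 hAD2 hAD3 hAm X).
- exact: (one_drazin_chard mpA mp1 mpr1 hAD1 hAD2 hAD3 hAm X).
- exact: (one_drazin_chare mpA mp1 mpr1 hAD1 hAD2 hAD3 hAm X).
Qed.
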